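(* Let $\Omega\subset\mathbb{C}$ be a bounded domain whose boundary consists of $n$ disjoint Jordan curves, let $V_0,\dots,V_{n-1}$ be the connected components of $\hat{\mathbb{C}}\setminus\Omega$ with $\infty\in V_0$, let $\Omega_i=\hat{\mathbb{C}}\setminus V_i$, and let $\phi_i:\overline{D}\to\overline{\Omega_i}$ be Riemann mappings ($i=0,\dots,n-1$). For every $k\in\mathbb{N}$ and $i\in\{0,\dots,n-1\}$, the set $$E^{(i)}_k=\{f\in A(\Omega):\operatorname{Re}(f\circ\phi_i)\restriction_{\mathbb{T}}\in D_k\}$$ is an open subset of $A(\Omega)$.
   Context: $D$ is the open unit disc, $\mathbb{T}=\partial D$. A Riemann mapping $\phi_i:\overline{D}\to\overline{\Omega_i}$ (closure in $\hat{\mathbb{C}}$) is a homeomorphism mapping $D$ conformally onto $\Omega_i$; note $\phi_i(\mathbb{T})=\partial V_i\subset\partial\Omega$. $A(\Omega)$ is the space of functions continuous on $\overline{\Omega}$ and holomorphic on $\Omega$, with the supremum norm on $\overline{\Omega}$. Functions on $\mathbb{T}$ are identified with $2\pi$-periodic functions on $\mathbb{R}$ via $y\mapsto e^{iy}$. For $k\in\mathbb{N}$, $D_k$ is the set of real continuous functions $u$ on $\mathbb{T}$ such that for every $\theta\in\mathbb{R}$ there exists $y\in(\theta,\theta+\frac1k)$ with $|u(y)-u(\theta)|>k|y-\theta|$. *)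

(* C is modelled by R[i] (real_closed's
   complex numbers) over an arbitrary realType R, with its modulus topology;
   the Riemann sphere is MathComp-Analysis' one-point compactification of C. *)
From HB Require Import structures.
From mathcomp Require Import all_boot all_order all_algebra.
From mathcomp Require Import all_classical all_reals all_analysis.
From mathcomp Require Import complex.
Import Order.TTheory GRing.Theory Num.Theory.
Import numFieldNormedType.Exports.
Export numFieldNormedType.Exports.
Set Implicit Arguments. Unset Strict Implicit. Unset Printing Implicit Defensive.
Local Open Scope classical_set_scope.
Local Open Scope ring_scope.

Definition CC (R : realType) : numClosedFieldType := R[i].

(* The Riemann sphere  \hat C = C ∪ {∞}, with None = ∞. *)
Definition Chat (R : realType) : topologicalType :=
  one_point_compactification (CC R).

Section Defs.
Variable R : realType.
Local Notation C := (CC R).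
Local Notation Ch := (Chat R).

Definition modulus (z : C) : R := ComplexField.Normc.normc (z : R[i]).

Definition unit_circle : set C := [set z | modulus z = 1].
Definition open_disc : set C := [set z | modulus z < 1].
Definition closed_disc : set C := [set z | modulus z <= 1].

Definition expi (y : R) : C := (cos y +i* sin y)%C.

Definition toChat (z : C) : Ch := Some z.

Definition boundary (A : set C) : set C := closure A `\` interior A.

Definition bounded_C (A : set C) : Prop :=
  exists M : R, forall z, A z -> modulus z <= M.

Definition domain (A : set C) : Prop := open A /\ connected A /\ A !=set0.

(* a Jordan curve: homeomorphic image of the unit circle
   (continuous injective image of a compact set in a Hausdorff space) *)
Definition jordan_curve (J : set C) : Prop :=
  exists g : C -> C,
    {within unit_circle, continuous g} /\
    (forall z w, unit_circle z -> unit_circle w -> g z = g w -> z = w) /\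
    g @` unit_circle = J.

Definition sphere_holomorphic_at (phi : C -> Ch) (z : C) : Prop :=
  match phi z with
  | Some _ => derivable (fun w => odflt 0 (phi w)) z 1
  | None => derivable (fun w => if phi w is Some a then a^-1 else 0) z 1
  end.

(* phi : \bar D -> \bar U (closure in \hat C) is a homeomorphism mapping D
   conformally (i.e. injectively and holomorphically) onto U. *)
Definition riemann_mapping (phi : C -> Ch) (U : set Ch) : Prop :=
  [/\ {within closed_disc, continuous phi},
      (forall z w, closed_disc z -> closed_disc w -> phi z = phi w -> z = w),
      phi @` closed_disc = closure U &
      (exists psi : Ch -> C,
          {within closure U, continuous psi} /\
          forall z, closed_disc z -> psi (phi z) = z)] /\
  (phi @` open_disc = U /\
   forall z, open_disc z -> sphere_holomorphic_at phi z).

Definition disc_algebra (Omega : set C) (f : C -> C) : Prop :=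
  {within closure Omega, continuous f} /\
  forall z, Omega z -> derivable f z 1.

Definition supdist (Omega : set C) (f g : C -> C) : R :=
  sup [set modulus (f z - g z) | z in closure Omega].

Definition open_in_A (Omega : set C) (E : set (C -> C)) : Prop :=
  forall f, E f -> exists2 eps : R, 0 < eps &
    forall g, disc_algebra Omega g -> supdist Omega f g < eps -> E g.

(* D_k, for functions on T identified with 2pi-periodic functions on R *)
Definition Dk (k : nat) : set (R -> R) :=
  [set u | [/\ continuous u,
              (forall y, u (y + 2 * pi) = u y) &
              forall theta, exists y,
                theta < y < theta + k%:R^-1 /\
                `|u y - u theta| > k%:R * `|y - theta| ] ].

Definition Ek (Omega : set C) (phi : nat -> C -> Ch) (k i : nat) : set (C -> C) :=
  [set f | disc_algebra Omega f /\
           Dk k (fun y => complex.Re (f (odflt 0 (phi i (expi y)) : R[i])))].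

End Defs.

(* Write u_f = Re (f o phi_i) on the unit circle.  Near a point of V_i the
   other components of the complement of Omega (closed and pairwise disjoint)
   are absent, so phi_i maps the circle into the closure of Omega, a compact
   subset of C; hence |u_f - u_g| <= ||f - g||.  Each defining inequality of
   D_k is strict, so by continuity of u_f and compactness of one period it
   holds with a uniform margin d > 0, which survives perturbations of u_f by
   less than d/2. *)

From HB Require Import structures.
From mathcomp Require Import all_boot all_order all_algebra.
From mathcomp Require Import all_classical all_reals all_analysis.
From mathcomp Require Import complex.
From mathcomp Require Import lra.
Import Order.TTheory GRing.Theory Num.Theory.
Import numFieldNormedType.Exports.
Local Open Scope classical_set_scope.
Local Open Scope ring_scope.
Set Implicit Arguments.
Unset Strict Implicit.
Unset Printing Implicit Defensive.

Section ComplexPlane.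
Variable R : realType.
Local Notation C := (CC R).

Lemma modulusE (z : C) : (modulus z)%:C%C = `|z|.
Proof. by []. Qed.

Lemma modulus_real (x : R) : modulus x%:C%C = `|x|.
Proof. by rewrite /modulus /= expr0n addr0 sqrtr_sqr. Qed.

Lemma modulus_dist (z w : C) : `|modulus z - modulus w| <= modulus (z - w).
Proof.
by rewrite -modulus_real -lecR !modulusE rmorphB /= !modulusE ler_dist_dist.
Qed.

Lemma ReB (z w : C) : complex.Re (z - w) = complex.Re z - complex.Re w.
Proof. by case: z; case: w. Qed.

Lemma Re_le_modulus (z : C) : `|complex.Re z| <= modulus z.
Proof. by rewrite -lecR modulusE normc_ge_Re. Qed.

Lemma Im_le_modulus (z : C) : `|complex.Im z| <= modulus z.
Proof.
case: z => a b; rewrite /modulus /ComplexField.Normc.normc /=.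
by rewrite -sqrtr_sqr ler_wsqrtr // lerDr sqr_ge0.
Qed.

Lemma Re_dist (z w : C) : `|complex.Re z - complex.Re w| <= modulus (z - w).
Proof. by rewrite -ReB Re_le_modulus. Qed.

Lemma modulus_le_ReIm (z : C) :
  modulus z <= `|complex.Re z| + `|complex.Im z|.
Proof.
case: z => a b; rewrite /modulus /ComplexField.Normc.normc /=.
rewrite -[X in _ <= X]ger0_norm ?addr_ge0 // -sqrtr_sqr ler_wsqrtr //.
rewrite sqrrD -[a ^+ 2]real_normK ?num_real // -[b ^+ 2]real_normK ?num_real //.
have := mulr_ge0 (normr_ge0 a) (normr_ge0 b); lra.
Qed.

Lemma nbhs_modulusP (z : C) (A : set C) : nbhs z A <->
  exists2 r : R, 0 < r & forall w, modulus (z - w) < r -> A w.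
Proof.
rewrite nbhs_ballP; split=> [[[a b] /= e0 zA]|[r r0 zA]].
  move: e0; rewrite ltcE /= => /andP[/eqP b0 a0]; exists a => // w zw.
  by apply: zA; rewrite -ball_normE /= -modulusE b0 ltcR.
exists r%:C%C => /=; first by rewrite ltcR.
by move=> w; rewrite -ball_normE /= -modulusE ltcR; apply: zA.
Qed.

Lemma lipschitz_modulus_continuous (h : C -> R) :
  (forall z w, `|h z - h w| <= modulus (z - w)) -> continuous h.
Proof.
move=> hL z B /nbhs_ballP[e /= e0 zB]; apply/nbhs_modulusP; exists e => // w zw.
by apply: zB; rewrite -ball_normE /=; apply: le_lt_trans zw.
Qed.

Definition complex_of_pair (p : R * R) : C := (p.1 +i* p.2)%C.

Lemma complex_of_pair_continuous : continuous complex_of_pair.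
Proof.
case=> a b B /nbhs_modulusP[r r0 abB].
have r2 : 0 < r / 2 by rewrite divr_gt0.
exists ([set x | `|a - x| < r / 2], [set y | `|b - y| < r / 2]).
  by split; apply/nbhs_ballP; exists (r / 2) => //= x; rewrite -ball_normE.
case=> x y [/= ax bx]; apply: abB.
by apply: le_lt_trans (modulus_le_ReIm _) _ => /=; lra.
Qed.

Lemma bounded_closure_compact (A : set C) : bounded_C A -> compact (closure A).
Proof.
case=> M AM; set S := `[-M, M] `*` `[-M, M].
have KS : compact (complex_of_pair @` S).
  apply: continuous_compact; last by apply: compact_setX; exact: segment_compact.
  exact: continuous_subspaceT complex_of_pair_continuous.
apply: (subclosed_compact _ KS); first exact: closed_closure.
have KS_closed := compact_closed (@norm_hausdorff _ _) KS.
rewrite [X in _ `<=` X](closure_id _).1 //; apply: closureS => z /AM zM.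
exists (complex.Re z, complex.Im z); last by case: z {zM}.
split; rewrite /= in_itv /= -ler_norml.
- exact: le_trans (Re_le_modulus z) zM.
- exact: le_trans (Im_le_modulus z) zM.
Qed.
End ComplexPlane.

Lemma continuous_comp_within {T U W : topologicalType} (A : set U)
    (g : T -> U) (f : U -> W) :
  (forall t, A (g t)) -> continuous g -> {within A, continuous f} ->
  continuous (f \o g).
Proof.
move=> gA gc /subspace_continuousP fc t B fB.
have near_gt : \forall u \near g t, A u -> B (f u) := fc _ (gA t) B fB.
suff : \forall s \near t, B (f (g s)) by [].
have : \forall s \near t, A (g s) -> B (f (g s)) := gc t _ near_gt.
by apply: filterS => s; apply.
Qed.

(* Neighbourhoods of [Some x] are by definition the images of those of [x]. *)
Lemma odflt_continuous_some {X : topologicalType} (x0 x : X) :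
  {for Some x, continuous (odflt x0 : one_point_compactification X -> X)}.
Proof. by []. Qed.

Section Components.
Context {X : topologicalType} (A : set X) (V : nat -> set X) (n : nat).
Hypothesis A_closed : closed A.
Hypothesis V_components : forall i, (i < n)%N ->
  exists2 x, A x & V i = connected_component A x.
Hypothesis V_inj : forall i j, (i < n)%N -> (j < n)%N -> V i = V j -> i = j.
Hypothesis V_cover : forall x, A x -> exists2 i, (i < n)%N & V i x.

Lemma components_closed i : (i < n)%N -> closed (V i).
Proof. by move=> /V_components[x _ ->]; exact: component_closed. Qed.

Lemma components_disjoint i j p : (i < n)%N -> (j < n)%N ->
  V i p -> V j p -> i = j.
Proof.
move=> ilt jlt; have [x _ Vi] := V_components ilt.
have [y _ Vj] := V_components jlt.
rewrite Vi Vj => /same_connected_component eip /same_connected_component ejp.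
by apply: V_inj => //; rewrite Vi Vj eip ejp.
Qed.

Lemma near_other_components i p : (i < n)%N -> V i p ->
  \forall q \near p, forall j, (j < n)%N -> j <> i -> ~ V j q.
Proof.
move=> ilt Vip.
have : \forall q \near p, forall j : 'I_n, (j : nat) <> i -> ~ V j q.
  apply: filter_forall => j; have [->|ji] := eqVneq (j : nat) i.
    by apply: filterE.
  apply: filterS (open_nbhs_nbhs (_ : open_nbhs p (~` V j))) => [q Vjq _ //|].
  split; first exact/closed_openC/components_closed.
  by move=> Vjp; move/eqP: ji; apply; apply: components_disjoint Vjp Vip.
by apply: filterS => q H j jlt; exact: (H (Ordinal jlt)).
Qed.

Lemma component_frontier_sub i : (i < n)%N ->
  V i `&` closure (~` V i) `<=` closure (~` A).
Proof.
move=> ilt p [Vip pcl] B pB.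
have [q [nViq [Bq qoth]]] := pcl _ (filterI pB (near_other_components ilt Vip)).
exists q; split=> // Aq; have [j jlt Vjq] := V_cover Aq.
have ji : j <> i by move=> ji; apply: nViq; rewrite -ji.
exact: qoth j jlt ji Vjq.
Qed.

End Components.

Section RiemannSphere.
Variable R : realType.
Local Notation C := (CC R).
Local Notation Ch := (Chat R).

Lemma modulus_expi (y : R) : modulus (expi y) = 1.
Proof. by rewrite /modulus /expi /ComplexField.Normc.normc cos2Dsin2 sqrtr1. Qed.

Lemma expi_periodic : periodic (@expi R) (2 * pi).
Proof. by move=> y; rewrite /expi mulr_natl cosD2pi sinD2pi. Qed.

Lemma expi_continuous : continuous (@expi R).
Proof.
move=> y; have cs : {for y, continuous (fun y : R => (cos y, sin y))}.
  exact: cvg_pair (@continuous_cos R y) (@continuous_sin R y).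
exact: continuous_comp cs (@complex_of_pair_continuous R _).
Qed.

Lemma riemann_mapping_circle (phi : C -> Ch) (U : set Ch) (w : C) :
  riemann_mapping phi U -> modulus w = 1 -> closure U (phi w) /\ ~ U (phi w).
Proof.
move=> [[_ phi_inj phi_closed _] [phi_open _]] w1.
have wD : closed_disc w by rewrite /closed_disc /= w1.
split; first by rewrite -phi_closed; exists w.
rewrite -phi_open => -[v vD /(phi_inj v w (ltW vD) wD) vw].
by move: vD; rewrite /open_disc /= vw w1 ltxx.
Qed.

Lemma closure_toChat (A : set C) (p : Ch) : bounded_C A ->
  closure (@toChat R @` A) p -> exists2 z, p = Some z & closure A z.
Proof.
move=> /bounded_closure_compact Kc; case: p => [z|] Acl.
  exists z => // B zB.
  have Bnbhs := one_point_compactification_some_nbhs _ _ zB.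
  have [_ [[v Av <-] [b Bb [bv]]]] := Acl _ Bnbhs.
  by exists v; split; rewrite // -bv.
have : nbhs (None : Ch) (Some @` (~` closure A) `|` [set None]).
  by exists (closure A) => //; split => //; exact: closed_closure.
move/Acl => [_ [[v Av <-] [[b nb [bv]]|//]]].
by case: nb; rewrite bv; exact: subset_closure.
Qed.

End RiemannSphere.

Lemma compact_has_ubound {R : realType} (A : set R) : compact A -> has_ubound A.
Proof.
move=> /compact_bounded[M [_ AM]]; exists (M + 1) => x Ax.
have MM : M < M + 1 by rewrite ltrDl.
by have /= := AM _ MM x Ax; rewrite ler_norml => /andP[].
Qed.

Section BoundaryValues.
Variable R : realType.
Local Notation C := (CC R).
Local Notation Ch := (Chat R).

Lemma riemann_circle_closure (Omega : set C) (V : nat -> set Ch)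
    (phi : C -> Ch) (n i : nat) :
  open Omega -> bounded_C Omega ->
  (forall i, (i < n)%N -> exists2 x, (~` (@toChat R @` Omega)) x &
      V i = connected_component (~` (@toChat R @` Omega)) x) ->
  (forall i j, (i < n)%N -> (j < n)%N -> V i = V j -> i = j) ->
  (forall x, (~` (@toChat R @` Omega)) x -> exists2 i, (i < n)%N & V i x) ->
  (i < n)%N -> riemann_mapping phi (~` V i) ->
  forall w, modulus w = 1 -> exists2 z, phi w = Some z & closure Omega z.
Proof.
move=> Oo Ob hV hinj hcov ilt phiR w w1.
have A_closed : closed (~` (@toChat R @` Omega)).
  exact/open_closedC/one_point_compactification_open_some.
have [wcl wV] := riemann_mapping_circle phiR w1.
apply: closure_toChat Ob _; rewrite -[_ @` Omega]setCK.
apply: (component_frontier_sub A_closed hV hinj hcov ilt); split => //.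
exact: contrapT.
Qed.

Lemma boundary_trace_continuous (A : set C) (phi : C -> Ch) (f : C -> C) :
  {within @closed_disc R, continuous phi} ->
  (forall y, exists2 z, phi (expi y) = Some z & A z) ->
  {within A, continuous f} ->
  continuous (fun y => complex.Re (f (odflt 0 (phi (expi y))))).
Proof.
move=> phic phiA fc.
have trace_cont : continuous (fun y => odflt 0 (phi (expi y))).
  move=> y; have [z yz _] := phiA y.
  have phiexpi_cont : continuous (phi \o @expi R).
    apply: continuous_comp_within phic => [t|]; last exact: expi_continuous.
    by change (modulus (expi t) <= 1); rewrite modulus_expi.
  apply: (continuous_comp (phiexpi_cont y)); rewrite /= yz.
  exact: odflt_continuous_some.
have fA_cont := continuous_comp_within _ trace_cont fc.
have Re_cont : continuous (@complex.Re R : C -> R).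
  exact: lipschitz_modulus_continuous (@Re_dist R).
move=> y; apply: (continuous_comp (fA_cont _ y)); last exact: Re_cont.
by move=> t /=; have [z ->] := phiA t.
Qed.

Lemma modulus_le_supdist (Omega : set C) (f g : C -> C) (z : C) :
  bounded_C Omega -> {within closure Omega, continuous f} ->
  {within closure Omega, continuous g} -> closure Omega z ->
  modulus (f z - g z) <= supdist Omega f g.
Proof.
move=> /bounded_closure_compact Kc fc gc zcl; apply: ub_le_sup; last by exists z.
have modulus_cont : continuous (@modulus R).
  exact: lipschitz_modulus_continuous (@modulus_dist R).
apply: compact_has_ubound; apply: continuous_compact Kc => x.
exact: continuous_comp (continuousB (fc x) (gc x)) (modulus_cont _).
Qed.

End BoundaryValues.

Lemma periodicz {U V : zmodType} (f : U -> V) (T : U) :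
  periodic f T -> forall (m : int) a, f (a + T *~ m) = f a.
Proof.
move=> fT [] n a; first exact: periodicn.
by rewrite -[in RHS](subrK (T *+ n.+1) a) periodicn // NegzE mulrNz.
Qed.

Section DkMargin.
Variable R : realType.
Variable k : nat.

Definition Dk_margin (d : R) (u : R -> R) (th : R) : Prop :=
  exists y, th < y < th + k%:R^-1 /\ k%:R * `|y - th| + d < `|u y - u th|.

Lemma Dk_margin_periodic (d T : R) (u : R -> R) (th : R) :
  periodic u T -> Dk_margin d u th -> Dk_margin d u (th + T).
Proof.
move=> uT [y [/andP[thy yth] ymargin]]; exists (y + T).
rewrite !uT opprD addrACA subrr addr0; split => //.
by rewrite ltrD2r thy /= addrAC ltrD2r.
Qed.

Lemma Dk_margin_near (u : R -> R) (th : R) : continuous u ->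
  Dk_margin 0 u th -> \forall th' \near th & d \near 0^'+, Dk_margin d u th'.
Proof.
move=> uc [y [/andP[thy yth]]]; rewrite addr0 -subr_gt0.
set g := fun t => `|u y - u t| - k%:R * `|y - t|.
have gc : {for th, continuous g}.
  apply: cvgB; first by apply: cvg_norm; apply: cvgB; [exact: cvg_cst | exact: uc].
  apply: cvgM; first exact: cvg_cst.
  by apply: cvg_norm; apply: cvgB; [exact: cvg_cst | exact: cvg_id].
move=> g0; have {}g0 : 0 < g th by [].
have th_near : \forall t \near th, [/\ t < y, y < t + k%:R^-1 & g th / 2 < g t].
  near=> t; split.
  - by near: t; exact: lt_nbhsl.
  - by rewrite -ltrBlDr; near: t; apply: lt_nbhsr; rewrite ltrBlDr.
  - by near: t; apply: (cvgr_gt _ gc); rewrite ltr_pdivrMr // ltr_pMr // ltr1n.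
exists ([set t | [/\ t < y, y < t + k%:R^-1 & g th / 2 < g t]],
        [set d | d < g th / 2]).
  by split; [exact: th_near | exact: nbhs_right_lt (divr_gt0 g0 _)].
case=> t d /= [[ty yt gt] dg]; exists y; split; first by apply/andP.
by move: gt dg; rewrite /g distrC (distrC (u y)); lra.
Unshelve. all: by end_near.
Qed.

Lemma Dk_uniform_margin (u : R -> R) :
  Dk k u -> exists2 d, 0 < d & forall th, Dk_margin d u th.
Proof.
move=> [uc uper uDk].
have pi2_gt0 : 0 < 2 * pi :> R by rewrite mulr_gt0 ?pi_gt0.
have cov : \forall d \near 0^'+, `[0, 2 * pi] `<=` Dk_margin d u.
  have := (compact_near_coveringP `[0, 2 * pi]).1 (@segment_compact R 0 (2 * pi)).
  move=> /(near_covering_withinP _).2 /(_ R 0^'+ (fun d => Dk_margin d u)).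
  apply => // th _.
  have [y [yth margin]] := uDk th.
  have : Dk_margin 0 u th by exists y; rewrite addr0.
  by move=> /(Dk_margin_near uc); apply: filterS => -[? ?] ? _.
have [d [d0 dcov]] := filter_ex (filterI (nbhs_right_gt 0) cov).
exists d => // th; set m := Num.floor (th / (2 * pi)).
rewrite -[th](subrK ((2 * pi) *~ m)).
apply: Dk_margin_periodic; first exact: periodicz.
apply: dcov; rewrite /= in_itv /= -mulrzr.
have /andP[] := floor_itv (th / (2 * pi)); rewrite -/m intrD.
by rewrite ler_pdivlMr // ltr_pdivrMr // (mulrC _ (2 * pi)); nra.
Qed.

Lemma Dk_margin_perturb (u v : R -> R) (d s : R) :
  (forall th, Dk_margin d u th) -> continuous v -> periodic v (2 * pi) ->
  (forall x, `|u x - v x| <= s) -> 2 * s < d -> Dk k v.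
Proof.
move=> um vc vper uv sd; split => // th.
have [y [yth ymargin]] := um th; exists y; split => //.
have := ler_distD (v y) (u y) (u th); have := ler_distD (v th) (v y) (u th).
by move: (uv y) (uv th) ymargin sd; rewrite (distrC (v th)) (distrC (v y)); lra.
Qed.

End DkMargin.

Theorem lemma4p1 (R : realType) (n : nat) (Omega : set (CC R))
  (V : nat -> set (Chat R)) (phi : nat -> CC R -> Chat R) :
  domain Omega ->
  bounded_C Omega ->
  (exists J : nat -> set (CC R),
      [/\ forall i, (i < n)%N -> jordan_curve (J i),
          forall i j, (i < n)%N -> (j < n)%N -> i <> j -> J i `&` J j = set0 &
          boundary Omega = [set z | exists2 i, (i < n)%N & J i z]]) ->
  (* V_0, ..., V_{n-1} are the connected components of \hat C \ Omega *)
  (forall i, (i < n)%N -> exists2 x, (~` (@toChat R @` Omega)) x &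
      V i = connected_component (~` (@toChat R @` Omega)) x) ->
  (forall i j, (i < n)%N -> (j < n)%N -> V i = V j -> i = j) ->
  (forall x, (~` (@toChat R @` Omega)) x -> exists2 i, (i < n)%N & V i x) ->
  V 0%N (None : Chat R) ->
  (* phi_i : \bar D -> \bar Omega_i Riemann mappings, Omega_i = \hat C \ V_i *)
  (forall i, (i < n)%N -> riemann_mapping (phi i) (~` V i)) ->
  forall k i : nat, (0 < k)%N -> (i < n)%N ->
  open_in_A Omega (Ek Omega phi k i).
Proof.
move=> [Oopen _] Obnd _ hV hinj hcov _ hR k i _ ilt f [fA uDk].
have phi_circle y : exists2 z, phi i (expi y) = Some z & closure Omega z.
  apply: riemann_circle_closure Oopen Obnd hV hinj hcov ilt (hR i ilt) _ _.
  exact: modulus_expi.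
have [[phic _ _ _] _] := hR i ilt.
have [d d0 fmargin] := Dk_uniform_margin uDk.
exists (d / 2); first by rewrite divr_gt0.
move=> g gA fg; split => //.
apply: (Dk_margin_perturb fmargin (boundary_trace_continuous phic phi_circle gA.1)).
- by move=> y; rewrite /= expi_periodic.
- move=> y; have [z -> zcl] := phi_circle y.
  exact: le_trans (Re_dist _ _) (modulus_le_supdist Obnd fA.1 gA.1 zcl).
- by move: fg; lra.
Qed.
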